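(* Let $G$ be a graph and let $K$ be a cut-set of the complement $\overline{G}$. Then \[\chi(G) \leq \frac{1}{2} \left(\omega(G) + \Delta(G) + 1 \right) + \frac{4\chi(G[K]) + \alpha(G[K]) + 3 - \alpha(G)}{4}.\]
   Context: All graphs are finite and simple with non-empty vertex set. $\chi$ is the chromatic number, $\omega$ the clique number, $\Delta$ the maximum degree, $\alpha$ the independence number. $\overline{G}$ is the complement of $G$. A cut-set of $\overline{G}$ is a set $K$ of vertices such that $\overline{G}-K$ is disconnected; $G[K]$ is the subgraph of $G$ induced by $K$. By convention the graph on the empty vertex set has chromatic number $0$ and independence number $0$. *)

(* A simple graph is a symmetric irreflexive relation e on a finType T. *)
From mathcomp Require Import all_boot all_order all_algebra.
Set Implicit Arguments. Unset Strict Implicit. Unset Printing Implicit Defensive.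

Section Graphs.
Variables (T : finType) (e : rel T).

Definition clique (A : {set T}) : bool :=
  [forall x in A, forall y in A, (x != y) ==> e x y].

Definition stable (A : {set T}) : bool :=
  [forall x in A, forall y in A, ~~ e x y].

(* chromatic number of G[A]: least number of stable blocks partitioning A
   (0 when A is empty; #|A| is attained by the singleton partition) *)
Definition chi_on (A : {set T}) : nat :=
  \big[minn/#|A|]_(P : {set {set T}} | partition P A && [forall B in P, stable B]) #|P|.

Definition alpha_on (A : {set T}) : nat :=
  \max_(B : {set T} | (B \subset A) && stable B) #|B|.

Definition chi : nat := chi_on setT.
Definition alpha : nat := alpha_on setT.

Definition omega : nat := \max_(B : {set T} | clique B) #|B|.

Definition Delta : nat := \max_(x : T) #|[set y | e x y]|.

Definition compl_rel : rel T := [rel x y | (x != y) && ~~ e x y].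

(* K is a cut-set of the complement: complement minus K is disconnected,
   i.e. has two vertices not joined by a path inside V \ K *)
Definition compl_cutset (K : {set T}) : Prop :=
  exists u v, [/\ u \notin K, v \notin K &
    ~~ connect [rel x y | [&& x \notin K, y \notin K & compl_rel x y]] u v].

End Graphs.

From mathcomp Require Import all_boot all_order all_algebra.
From mathcomp Require Import zify lra.
Set Implicit Arguments. Unset Strict Implicit. Unset Printing Implicit Defensive.
Import Order.TTheory.

(* A cut-set K of the complement splits V \ K into two nonempty parts A and B
   such that every vertex of A is adjacent to every vertex of B.  Therefore
   chi <= chi(K) + chi(A) + chi(B), omega >= omega(A) + omega(B),
   Delta >= Delta(A) + |B|, Delta >= Delta(B) + |A| and
   alpha <= alpha(K) + max(alpha(A), alpha(B)), so the corollary follows by adding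
   4 chi(H) <= 2 omega(H) + Delta(H) + |H| + 1 for the part of smaller alpha and
   4 chi(H) + alpha(H) <= 2 omega(H) + Delta(H) + |H| + 4 for the other.
   The second bound follows from the first applied to H minus a maximum stable set,
   whose removal lowers Delta.  The first is proved by induction with the same step
   when alpha(H) >= 3.  When alpha(H) <= 2, the classes of an optimal colouring
   have at most two vertices, so 2 chi <= |H| + s where s counts the singleton
   classes; the singletons form a clique, and recolouring arguments show that
   2 s + |N'(u)| <= 2 omega for a singleton u and its non-neighbourhood N'(u),
   while |H| <= 1 + deg u + |N'(u)|. *)

Lemma cardsU_disjoint (T : finType) (A B : {set T}) :
  [disjoint A & B] -> #|A :|: B| = #|A| + #|B|.
Proof. by move=> dAB; rewrite cardsU disjoint_setI0 // cards0 subn0. Qed.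

Section Graph.
Variables (T : finType) (e : rel T).
Hypotheses (e_sym : symmetric e) (e_irr : irreflexive e).

Definition omega_on (X : {set T}) : nat :=
  \max_(B : {set T} | (B \subset X) && clique e B) #|B|.

Definition Delta_on (X : {set T}) : nat := \max_(x in X) #|[set y in X | e x y]|.

Definition coloring (C : finType) (X : {set T}) (f : T -> C) : Prop :=
  forall x y, x \in X -> y \in X -> e x y -> f x != f y.

Lemma stableP (B : {set T}) :
  reflect (forall x y, x \in B -> y \in B -> ~~ e x y) (stable e B).
Proof.
apply: (iffP forall_inP) => [sB x y xB yB|sB x xB]; last by apply/forall_inP => y; apply: sB.
by move/forall_inP: (sB x xB); apply.
Qed.

Lemma cliqueP (B : {set T}) :
  reflect (forall x y, x \in B -> y \in B -> x != y -> e x y) (clique e B).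
Proof.
apply: (iffP forall_inP) => [cB x y xB yB|cB x xB].
  by move/forall_inP: (cB x xB) => /(_ y yB) /implyP.
by apply/forall_inP => y yB; apply/implyP; apply: cB.
Qed.

Lemma stableS (A B : {set T}) : A \subset B -> stable e B -> stable e A.
Proof.
by move=> /subsetP sAB /stableP sB; apply/stableP => x y /sAB xB /sAB yB; apply: sB.
Qed.

Lemma stable_set1 x : stable e [set x].
Proof. by apply/stableP => a b /set1P -> /set1P ->; rewrite e_irr. Qed.

Lemma clique_set1 x : clique e [set x].
Proof. by apply/cliqueP => a b /set1P -> /set1P ->; rewrite eqxx. Qed.

Lemma leq_alpha_on (X B : {set T}) : B \subset X -> stable e B -> #|B| <= alpha_on e X.
Proof. by move=> sBX sB; apply: leq_bigmax_cond; rewrite sBX. Qed.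

Lemma alpha_on_attained (X : {set T}) :
  exists2 B : {set T}, (B \subset X) && stable e B & #|B| = alpha_on e X.
Proof.
have : 0 < #|[pred B : {set T} | (B \subset X) && stable e B]|.
  by apply/card_gt0P; exists set0; rewrite inE sub0set; apply/stableP => x y; rewrite inE.
rewrite /alpha_on; case/(eq_bigmax_cond (fun B : {set T} => #|B|)) => B sB ->.
by exists B.
Qed.

Lemma alpha_on_le_card (X : {set T}) : alpha_on e X <= #|X|.
Proof. by apply/bigmax_leqP => B /andP [sBX _]; apply: subset_leq_card. Qed.

Lemma leq_omega_on (X B : {set T}) : B \subset X -> clique e B -> #|B| <= omega_on X.
Proof. by move=> sBX cB; apply: leq_bigmax_cond; rewrite sBX. Qed.

Lemma omega_on_attained (X : {set T}) :
  exists2 Q : {set T}, (Q \subset X) && clique e Q & #|Q| = omega_on X.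
Proof.
have : 0 < #|[pred B : {set T} | (B \subset X) && clique e B]|.
  by apply/card_gt0P; exists set0; rewrite inE sub0set; apply/cliqueP => x y; rewrite inE.
rewrite /omega_on; case/(eq_bigmax_cond (fun B : {set T} => #|B|)) => B cB ->.
by exists B.
Qed.

Lemma subset_omega_on (X Y : {set T}) : X \subset Y -> omega_on X <= omega_on Y.
Proof.
move=> sXY; apply/bigmax_leqP => B /andP [sBX cB].
by apply: leq_omega_on (subset_trans sBX sXY) cB.
Qed.

Lemma omega_on_gt0 (X : {set T}) : X != set0 -> 0 < omega_on X.
Proof.
case/set0Pn => x xX; rewrite -(cards1 x).
by apply: leq_omega_on (clique_set1 x); rewrite sub1set.
Qed.

Lemma leq_Delta_on (X : {set T}) x : x \in X -> #|[set y in X | e x y]| <= Delta_on X.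
Proof. by move=> xX; apply: leq_bigmax_cond. Qed.

Lemma Delta_on_attained (X : {set T}) : X != set0 ->
  exists2 x, x \in X & #|[set y in X | e x y]| = Delta_on X.
Proof.
move=> /set0Pn [x0 x0X]; have : 0 < #|X| by apply/card_gt0P; exists x0.
rewrite /Delta_on; case/(eq_bigmax_cond (fun x => #|[set y in X | e x y]|)) => x xX ->.
by exists x.
Qed.

Lemma omega_omega_on : omega e = omega_on setT.
Proof. by apply: eq_bigl => B; rewrite subsetT. Qed.

Lemma Delta_Delta_on : Delta e = Delta_on setT.
Proof.
apply: eq_big => [x|x _]; first by rewrite in_setT.
by apply: eq_card => y; rewrite !inE.
Qed.

Lemma chi_on_le_coloring (C : finType) (X : {set T}) (f : T -> C) :
  coloring X f -> chi_on e X <= #|f @: X|.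
Proof.
move=> fcol; set P := preim_partition f X.
have sP : [forall B in P, stable e B].
  apply/forall_inP => B /imsetP [x xX ->]; apply/stableP => y z.
  rewrite !inE => /andP [yX /eqP fy] /andP [zX /eqP fz].
  by apply/negP => /(fcol y z yX zX); rewrite -fy -fz eqxx.
apply: (@leq_trans #|P|).
  by rewrite /chi_on -minEnat; apply: (@bigmin_le_cond _ nat); rewrite preim_partitionP sP.
have -> : P = (fun c => [set y in X | c == f y]) @: (f @: X) by rewrite -imset_comp.
exact: leq_imset_card.
Qed.

Lemma coloring_clique_inj (C : finType) (X B : {set T}) (f : T -> C) :
  coloring X f -> B \subset X -> clique e B -> {in B &, injective f}.
Proof.
move=> fcol /subsetP sBX /cliqueP cB x y xB yB fxy; have [//|nxy] := eqVneq x y.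
by move: (fcol x y (sBX x xB) (sBX y yB) (cB x y xB yB nxy)); rewrite fxy eqxx.
Qed.

Lemma chi_on_attained (X : {set T}) :
  exists2 f : T -> {set T}, coloring X f & #|f @: X| = chi_on e X.
Proof.
suff [f fcol fle] : exists2 f : T -> {set T}, coloring X f & #|f @: X| <= chi_on e X.
  by exists f => //; apply/eqP; rewrite eqn_leq fle chi_on_le_coloring.
apply: (big_ind (fun m => exists2 f : T -> {set T}, coloring X f & #|f @: X| <= m)).
- exists (fun x => [set x]); last exact: leq_imset_card.
  by move=> x y _ _; apply: contraTneq => /set1_inj ->; rewrite e_irr.
- move=> m1 m2 [f1 col1 le1] [f2 col2 le2].
  by case: (leqP m1 m2) => m12; [exists f1 | exists f2] => //; lia.
- move=> P /andP [partP /forall_inP stP]; have covP := cover_partition partP.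
  exists (pblock P); last first.
    apply/subset_leq_card/subsetP => _ /imsetP [x xX ->].
    by rewrite pblock_mem // covP.
  move=> x y xX yX; apply: contraTneq => Pxy.
  have PB : pblock P x \in P by rewrite pblock_mem // covP.
  have /stableP stB := stP _ PB.
  by apply: stB; [rewrite mem_pblock covP | rewrite Pxy mem_pblock covP].
Qed.

Lemma chi_on_setU (X Y : {set T}) : chi_on e (X :|: Y) <= chi_on e X + chi_on e Y.
Proof.
have [fX colX <-] := chi_on_attained X; have [fY colY <-] := chi_on_attained Y.
pose g z := if z \in X then inl (fX z) else @inr {set T} {set T} (fY z).
have gcol : coloring (X :|: Y) g.
  move=> x y; rewrite /g !inE => /orP xXY /orP yXY exy.
  case: ifP => xX; case: ifP => yX //.
  - by have := colX x y xX yX exy; apply: contra => /eqP [->].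
  - case: xXY; first by rewrite xX. case: yXY; first by rewrite yX.
    by move=> yY xY; have := colY x y xY yY exy; apply: contra => /eqP [->].
apply: leq_trans (chi_on_le_coloring gcol) _.
have sub : g @: (X :|: Y) \subset (inl @: (fX @: X)) :|: (inr @: (fY @: Y)).
  apply/subsetP => c /imsetP [z]; rewrite inE /g => /orP zXY ->.
  case: ifP => zX; rewrite inE; first by rewrite imset_f // imset_f.
  by case: zXY; rewrite ?zX // => zY; rewrite orbC imset_f // imset_f.
apply: leq_trans (subset_leq_card sub) _; apply: leq_trans (leq_card_setU _ _) _.
by apply: leq_add; apply: leq_imset_card.
Qed.

Lemma chi_on_stable (I : {set T}) : stable e I -> chi_on e I <= 1.
Proof.
move=> /stableP sI; have gcol : coloring I (fun _ => tt).
  by move=> x y xI yI; move/negP: (sI x y xI yI).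
apply: leq_trans (chi_on_le_coloring gcol) _.
by apply: leq_trans (max_card _) _; rewrite card_unit.
Qed.

Lemma chi_on_set0 : chi_on e set0 = 0.
Proof.
have gcol : coloring set0 (fun _ => tt) by move=> x y; rewrite inE.
by apply/eqP; rewrite -leqn0 -(cards0 unit) -(imset0 (fun _ : T => tt)) chi_on_le_coloring.
Qed.

Lemma maximum_stable_adj (X I : {set T}) x :
  I \subset X -> stable e I -> #|I| = alpha_on e X -> x \in X -> x \notin I ->
  exists2 z, z \in I & e x z.
Proof.
move=> sIX /stableP sI cardI xX xI; apply/exists_inP; apply: contraR xI.
rewrite negb_exists_in => /forall_inP nadj.
have : #|x |: I| <= alpha_on e X.
  apply: leq_alpha_on; first by rewrite subUset sub1set xX.
  apply/stableP => a b /setU1P [->|aI] /setU1P [->|bI]; rewrite ?e_irr ?nadj //.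
    by rewrite e_sym nadj.
  exact: sI.
by rewrite cardsU1 -cardI; case: (x \in I) => //; rewrite ltnn.
Qed.

Lemma Delta_on_setD_maximum_stable (X I : {set T}) :
  I \subset X -> stable e I -> #|I| = alpha_on e X -> X :\: I != set0 ->
  Delta_on (X :\: I) < Delta_on X.
Proof.
move=> sIX sI cardI /Delta_on_attained [x /setDP [xX xI] <-].
have [z zI exz] := maximum_stable_adj sIX sI cardI xX xI.
apply: leq_trans (leq_Delta_on xX); apply: proper_card; rewrite properE.
apply/andP; split.
  by apply/subsetP => y; rewrite !inE => /andP [/andP [_ ->] ->].
apply/subsetPn; exists z; first by rewrite inE (subsetP sIX) // exz.
by rewrite !inE zI.
Qed.

Lemma chi_alpha_on_step (X : {set T}) :
  (forall Y : {set T}, #|Y| < #|X| ->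
     4 * chi_on e Y <= 2 * omega_on Y + Delta_on Y + #|Y| + 1) ->
  4 * chi_on e X + alpha_on e X <= 2 * omega_on X + Delta_on X + #|X| + 4.
Proof.
move=> IH; have [->|X0] := eqVneq X set0.
  by rewrite chi_on_set0; have := alpha_on_le_card set0; rewrite cards0; lia.
have [I /andP [sIX sI] cardI] := alpha_on_attained X.
set X' := X :\: I.
have chiX : chi_on e X <= chi_on e X' + 1.
  rewrite -{1}(setID X I) (setIidPr sIX) setUC; apply: leq_trans (chi_on_setU _ _) _.
  by rewrite leq_add2l chi_on_stable.
have cardX' : #|X'| = #|X| - #|I| by rewrite cardsDS.
have omegaX : 0 < omega_on X := omega_on_gt0 X0.
have cardIX : #|I| <= #|X| by apply: subset_leq_card.
have cardI_gt0 : 0 < #|I|.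
  case/set0Pn: X0 => x xX; rewrite cardI -(cards1 x).
  by apply: leq_alpha_on (stable_set1 x); rewrite sub1set.
have [X'0|X'0] := eqVneq X' set0.
  by move: chiX cardX'; rewrite X'0 chi_on_set0 cards0; lia.
have DeltaX' : Delta_on X' < Delta_on X := Delta_on_setD_maximum_stable sIX sI cardI X'0.
have omegaX' : omega_on X' <= omega_on X := subset_omega_on (subsetDl X I).
have /IH : #|X'| < #|X| by lia.
lia.
Qed.

Definition non_nbhd (X : {set T}) v : {set T} := [set y in X | (y != v) && ~~ e v y].

Lemma non_nbhd_subset (X : {set T}) v : non_nbhd X v \subset X.
Proof. by apply/subsetP => y /setIdP []. Qed.

Lemma card_nbhd_split (X : {set T}) v : v \in X ->
  #|X| <= 1 + #|[set y in X | e v y]| + #|non_nbhd X v|.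
Proof.
move=> vX; set N := [set y in X | e v y].
have sub : X \subset (v |: N) :|: non_nbhd X v.
  apply/subsetP => y yX; rewrite !inE yX /=.
  by case: (eqVneq y v) => //= _; case: (e v y).
apply: leq_trans (subset_leq_card sub) _; apply: leq_trans (leq_card_setU _ _) _.
by rewrite leq_add2r -(cards1 v); apply: leq_card_setU.
Qed.

Section Solo.
Variables (C : finType) (X : {set T}) (f : T -> C).

Definition solo : {set T} := [set x in X | [forall y in X, (f y == f x) ==> (y == x)]].

Lemma soloX : solo \subset X.
Proof. by apply/subsetP => x /setIdP []. Qed.

Lemma solo_eq u y : u \in solo -> y \in X -> f y = f u -> y = u.
Proof.
by case/setIdP => _ /forall_inP solou yX fyu; apply/eqP/(implyP (solou y yX)); rewrite fyu.
Qed.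

Lemma solo_neq u y : u \in solo -> y \in X -> y != u -> f y != f u.
Proof. by move=> uS yX; apply: contraNneq => /(solo_eq uS yX) ->. Qed.

Lemma mem_solo u : u \in X -> (forall y, y \in X -> f y = f u -> y = u) -> u \in solo.
Proof.
by move=> uX solou; rewrite inE uX; apply/forall_inP => y yX; apply/implyP => /eqP /(solou y yX) ->.
Qed.

Lemma notin_solo a b : b \in X -> a != b -> f a = f b -> a \notin solo.
Proof. by move=> bX nab fab; apply: contra nab => aS; rewrite (solo_eq aS bX (esym fab)). Qed.

Lemma card_colors_solo : 2 * #|f @: X| <= #|X| + #|solo|.
Proof.
have -> : #|X| + #|solo| = \sum_(x in X) (1 + (x \in solo)).
  rewrite big_split /= sum1_card; congr (_ + _).
  rewrite (eq_bigr (fun x => if x \in solo then 1 else 0)); last by move=> x _; case: (x \in _).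
  rewrite -big_mkcondr /= -sum1_card; apply: eq_bigl => x /=.
  by case xS: (x \in solo); rewrite ?andbT ?andbF // (subsetP soloX x xS).
rewrite (partition_big_imset f) /= mulnC -sum_nat_const.
apply: leq_sum => _ /imsetP [x0 x0X ->].
rewrite (bigD1 x0) /=; last by rewrite x0X eqxx.
case x0S: (x0 \in solo); first by lia.
have : ~~ [forall y in X, (f y == f x0) ==> (y == x0)].
  by apply: contraFN x0S => solox0; rewrite inE x0X.
rewrite negb_forall_in => /exists_inP [y yX]; rewrite negb_imply => /andP [fy nyx].
by rewrite (bigD1 y) /=; [lia | rewrite yX fy nyx].
Qed.

(* [mate a] is junk (equal to [a]) when [a] is alone in its colour class. *)
Definition mate a : T := odflt a [pick b in X | (b != a) && (f b == f a)].

Lemma mateP a : a \in X -> a \notin solo ->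
  [/\ mate a \in X, mate a != a & f (mate a) = f a].
Proof.
move=> aX aS; rewrite /mate; case: pickP => [b /and3P [bX nba /eqP fba] | nomate] //=.
case/negP: aS; apply: mem_solo => // y yX fya; apply/eqP.
by move: (nomate y); rewrite yX fya eqxx andbT => /negbFE.
Qed.

End Solo.

Definition recolor (C : finType) (f : T -> C) u a b w z : C :=
  if z == u then f a else if z == b then f w else f z.

Section AlphaTwo.
Variable X : {set T}.
Hypothesis alphaX : alpha_on e X <= 2.

Lemma alpha2_adj a b c : a \in X -> b \in X -> c \in X -> a != b -> a != c -> b != c ->
  ~~ e a b -> ~~ e a c -> e b c.
Proof.
move=> aX bX cX nab nac nbc neab neac; apply: contraTT alphaX => nebc; rewrite -ltnNge.
have sX : c |: [set a; b] \subset X by rewrite !subUset !sub1set aX bX cX.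
have st : stable e (c |: [set a; b]).
  by apply/stableP => x y; rewrite !inE => /orP [|/orP []] /eqP -> /orP [|/orP []] /eqP ->;
    rewrite ?e_irr // e_sym.
apply: leq_trans (leq_alpha_on sX st).
by rewrite cardsU1 cards2 !inE negb_or nab (eq_sym c) nac (eq_sym c) nbc.
Qed.

Lemma non_nbhd_clique v : v \in X -> clique e (non_nbhd X v).
Proof.
move=> vX; apply/cliqueP => a b; rewrite !inE => /and3P [aX nav neva] /and3P [bX nbv nevb] nab.
by apply: (alpha2_adj vX); rewrite // eq_sym.
Qed.

Section OptimalColoring.
Variables (C : finType) (f : T -> C).
Hypotheses (fcol : coloring X f) (fopt : #|f @: X| = chi_on e X).

Lemma optimal_coloring_minimal (g : T -> C) c : coloring X g -> c \in f @: X ->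
  ~ g @: X \subset (f @: X) :\ c.
Proof.
move=> gcol cf /subset_leq_card; have := chi_on_le_coloring gcol.
by rewrite -fopt (cardsD1 c (f @: X)) cf; lia.
Qed.

Lemma color_class_le2 a b z : a \in X -> b \in X -> z \in X -> a != b ->
  f a = f b -> f z = f a -> z = a \/ z = b.
Proof.
move=> aX bX zX nab fab fza.
have [->|nza] := eqVneq z a; first by left.
have [->|nzb] := eqVneq z b; first by right.
have same_color x y : x \in X -> y \in X -> f x = f y -> ~~ e x y.
  by move=> xX yX fxy; apply/negP => /(fcol xX yX); rewrite fxy eqxx.
have := same_color b z bX zX; rewrite fza -fab => /(_ erefl).
rewrite (alpha2_adj aX bX zX nab) 1?eq_sym //.
  by apply: same_color.
by apply: same_color; rewrite // fza.
Qed.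

Lemma solo_clique : clique e (solo X f).
Proof.
apply/cliqueP => x y xS yS nxy; apply/negPn/negP => nexy.
have [xX yX] := (subsetP (soloX X f) x xS, subsetP (soloX X f) y yS).
pose g z := if z == y then f x else f z.
have gcol : coloring X g.
  move=> p q pX qX epq; rewrite /g.
  case: ifP => [/eqP epy|/negbT npy]; case: ifP => [/eqP eqy|/negbT nqy].
  - by move: epq; rewrite epy eqy e_irr.
  - by rewrite eq_sym (solo_neq xS) //; apply: contraNneq nexy => eqx; rewrite -eqx -epy e_sym.
  - by rewrite (solo_neq xS) //; apply: contraNneq nexy => epx; rewrite -epx -eqy.
  - exact: fcol.
apply: (optimal_coloring_minimal gcol (imset_f f yX)).
apply/subsetP => _ /imsetP [z zX ->]; rewrite /g !inE.
by case: ifP => [_|/negbT nzy]; rewrite (solo_neq yS) //= imset_f.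
Qed.

Section Recolor.
Variables (u a b : T).
Hypotheses (uS : u \in solo X f) (aX : a \in X) (bX : b \in X) (nab : a != b) (fab : f a = f b)
  (neua : ~~ e u a).

Let uX : u \in X := subsetP (soloX X f) u uS.
Let aS : a \notin solo X f := notin_solo bX nab fab.
Let bS : b \notin solo X f. Proof. by apply: notin_solo aX _ (esym fab); rewrite eq_sym. Qed.
Let nau : a != u. Proof. by apply: contraNneq aS => ->. Qed.
Let nbu : b != u. Proof. by apply: contraNneq bS => ->. Qed.

Lemma recolor_coloring w : w \in solo X f -> (w == u) || ~~ e b w ->
  coloring X (recolor f u a b w).
Proof.
move=> wS hw; set g := recolor f u a b w.
have gu : g u = f a by rewrite /g /recolor eqxx.
have gb : g b = f w by rewrite /g /recolor (negbTE nbu) eqxx.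
have gz z : z != u -> z != b -> g z = f z.
  by move=> nzu nzb; rewrite /g /recolor (negbTE nzu) (negbTE nzb).
have col_u q : q \in X -> e u q -> g u != g q.
  move=> qX euq; rewrite gu.
  have [equ|nqu] := eqVneq q u; first by rewrite equ e_irr in euq.
  have [->|nqb] := eqVneq q b.
    by rewrite gb; apply: contraNneq aS => /(solo_eq wS aX) ->.
  rewrite gz //; apply/eqP => faq.
  have [qa|qb] := color_class_le2 aX bX qX nab fab (esym faq); last by rewrite qb eqxx in nqb.
  by rewrite qa (negbTE neua) in euq.
have col_b q : q \in X -> q != u -> e b q -> g b != g q.
  move=> qX nqu ebq; rewrite gb.
  have [eqb|nqb] := eqVneq q b; first by rewrite eqb e_irr in ebq.
  rewrite gz //; apply/eqP => /esym /(solo_eq wS qX) eqw.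
  by rewrite -eqw (negbTE nqu) ebq in hw.
move=> p q pX qX.
have [->|npu] := eqVneq p u; first exact: col_u.
have [->|nqu] := eqVneq q u; first by rewrite e_sym eq_sym; apply: col_u.
have [->|npb] := eqVneq p b; first exact: col_b.
have [->|nqb] := eqVneq q b; first by rewrite e_sym eq_sym; apply: col_b.
by rewrite !gz //; apply: fcol.
Qed.

Lemma solo_mate_adj w : w \in solo X f -> w != u -> e b w.
Proof.
move=> wS nwu; apply/negPn/negP => nebw.
have hw : (w == u) || ~~ e b w by rewrite nebw orbT.
have gcol := recolor_coloring wS hw.
apply: (optimal_coloring_minimal gcol (imset_f f uX)).
apply/subsetP => _ /imsetP [z zX ->]; rewrite !inE /recolor.
case: ifP => [_|/negbT nzu]; first by rewrite (solo_neq uS) ?imset_f.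
by case: ifP => _; rewrite (solo_neq uS) ?imset_f // (subsetP (soloX X f)).
Qed.

Lemma recolor_swap :
  [/\ coloring X (recolor f u a b u), #|recolor f u a b u @: X| = chi_on e X,
      b \in solo X (recolor f u a b u)
    & forall w, w \in solo X f -> w != u -> w \in solo X (recolor f u a b u)].
Proof.
have gcol : coloring X (recolor f u a b u) by apply: recolor_coloring; rewrite ?eqxx.
split => //.
- apply/eqP; rewrite eqn_leq chi_on_le_coloring // andbT -fopt.
  apply/subset_leq_card/subsetP => _ /imsetP [z zX ->]; rewrite /recolor.
  by case: ifP => _; [|case: ifP => _]; rewrite imset_f.
- apply: mem_solo => // y yX; rewrite /recolor (negbTE nbu) eqxx.
  case: ifP => [_ /(solo_eq uS aX) au|/negbT nyu]; first by move: nau; rewrite au eqxx.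
  by case: ifP => [/eqP //|_] /(solo_eq uS yX) yu; rewrite yu eqxx in nyu.
move=> w wS nwu; have wX := subsetP (soloX X f) w wS.
have nwb : w != b by apply: contraNneq bS => <-.
apply: mem_solo => // y yX; rewrite /recolor (negbTE nwu) (negbTE nwb).
case: ifP => [_ /(solo_eq wS aX) aw|/negbT nyu]; first by move: aS; rewrite aw wS.
case: ifP => [_ /(solo_eq wS uX) uw|_]; first by rewrite uw eqxx in nwu.
exact: solo_eq wS yX.
Qed.

End Recolor.

End OptimalColoring.

Section NonNeighbours.
Variables (C : finType) (f : T -> C) (u : T).
Hypotheses (fcol : coloring X f) (fopt : #|f @: X| = chi_on e X) (uS : u \in solo X f).

Let uX : u \in X := subsetP (soloX X f) u uS.
Let N := non_nbhd X u.
Let N1 := [set a in N | [forall w in solo X f, (w != u) ==> e a w]].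
Let N2 := N :\: N1.
Local Notation mate := (mate X f).

Lemma non_nbhdP a : a \in N -> [/\ a \in X, a != u, ~~ e u a & a \notin solo X f].
Proof.
rewrite inE => /and3P [aX nau neua]; split => //.
by apply: contra neua => aS; move/cliqueP: (solo_clique fcol fopt); apply; rewrite // eq_sym.
Qed.

Lemma mate_non_nbhd a : a \in N ->
  [/\ mate a \in X, mate a != a, f (mate a) = f a, mate a != u & mate a \notin solo X f].
Proof.
case/non_nbhdP => aX nau _ aS; have [mX nma fma] := mateP aX aS.
have nmu : mate a != u by apply: contraNneq nau => mu; apply/eqP/(solo_eq uS aX); rewrite -fma mu.
by split => //; apply: notin_solo aX nma fma.
Qed.

Lemma mate_adj_u a : a \in N -> e u (mate a).
Proof.
move=> aN; have [aX nau neua _] := non_nbhdP aN; have [mX nma fma nmu _] := mate_non_nbhd aN.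
have neam : ~~ e a (mate a) by apply/negP => /(fcol aX mX); rewrite fma eqxx.
have neau : ~~ e a u by rewrite e_sym.
by apply: (alpha2_adj aX uX mX nau) => //; rewrite eq_sym.
Qed.

Lemma mate_adj_solo a w : a \in N -> w \in solo X f -> w != u -> e (mate a) w.
Proof.
move=> aN wS nwu; have [aX _ neua _] := non_nbhdP aN; have [mX nma fma _ _] := mate_non_nbhd aN.
by apply: (solo_mate_adj fcol fopt uS aX mX) => //; rewrite eq_sym.
Qed.

Let non_nbhd_color_inj : {in N &, injective f}.
Proof. exact: coloring_clique_inj fcol (non_nbhd_subset X u) (non_nbhd_clique uX). Qed.

Lemma mate_inj : {in N &, injective mate}.
Proof.
move=> a a' aN a'N mm; apply: non_nbhd_color_inj => //.
by have [_ _ <- _ _] := mate_non_nbhd aN; have [_ _ <- _ _] := mate_non_nbhd a'N; rewrite mm.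
Qed.

Lemma mate_adj a a' : a \in N2 -> a' \in N -> mate a != mate a' -> e (mate a) (mate a').
Proof.
case/setDP => aN aN1 a'N nmm.
have [aX nau neua _] := non_nbhdP aN; have [mX nma fma nmu _] := mate_non_nbhd aN.
have [a'X _ neua' _] := non_nbhdP a'N; have [m'X nm'a' fm'a' _ m'S] := mate_non_nbhd a'N.
have : ~~ [forall w in solo X f, (w != u) ==> e a w] by apply: contra aN1; rewrite inE aN.
rewrite negb_forall_in => /exists_inP [w wS]; rewrite negb_imply => /andP [nwu neaw].
apply/negPn/negP => nemm.
(* Swapping the colours of u and a' leaves mate a' alone in its class and w still
   alone in its own, so solo_mate_adj for the class {mate a, a} forces e a w. *)
have na'm' : a' != mate a' by rewrite eq_sym.
have [gcol gopt m'Sg soloSg] := recolor_swap fcol fopt uS a'X m'X na'm' (esym fm'a') neua'.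
have nam' : a != mate a'.
  apply: contraNneq nmm => am'.
  by rewrite (non_nbhd_color_inj aN a'N) // am'.
have g_fixed z : z != u -> z != mate a' -> recolor f u a' (mate a') u z = f z.
  by move=> nzu nzm; rewrite /recolor (negbTE nzu) (negbTE nzm).
have nwm' : w != mate a' by apply: contraNneq m'S => <-.
have := solo_mate_adj gcol gopt m'Sg mX aX nma _ _ (soloSg w wS nwu) nwm'.
by rewrite (negbTE neaw) !g_fixed // fma e_sym => /(_ erefl nemm).
Qed.

Lemma leq_solo_N1_omega : #|solo X f| - 1 + #|N1| <= omega_on X.
Proof.
have N1N : N1 \subset N by apply/subsetP => a /setIdP [].
have -> : #|solo X f| - 1 = #|solo X f :\ u| by rewrite (cardsD1 u) uS add1n subn1.
rewrite -cardsU_disjoint; last first.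
  rewrite disjoints_subset; apply/subsetP => x /setD1P [_ xS]; rewrite inE.
  by apply: contraTN xS => /(subsetP N1N) /non_nbhdP [].
apply: leq_omega_on.
  rewrite subUset (subset_trans (subsetDl _ _) (soloX X f)).
  exact: subset_trans N1N (non_nbhd_subset X u).
apply/cliqueP => x y /setUP [/setD1P [nxu xS]|xN1] /setUP [/setD1P [nyu yS]|yN1] nxy.
- by move/cliqueP: (solo_clique fcol fopt); apply.
- by case/setIdP: yN1 => _ /forall_inP /(_ x xS) /implyP /(_ nxu); rewrite e_sym.
- by case/setIdP: xN1 => _ /forall_inP /(_ y yS) /implyP /(_ nyu).
- by move/cliqueP: (non_nbhd_clique uX); apply => //; apply: (subsetP N1N).
Qed.

Lemma leq_solo_mate_omega (D : {set T}) : D \subset N ->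
  {in D &, forall a a', a != a' -> (a \in N2) || (a' \in N2)} ->
  #|solo X f| + #|D| <= omega_on X.
Proof.
move=> /subsetP sDN DN2.
rewrite -(card_in_imset (sub_in2 sDN mate_inj)) -cardsU_disjoint; last first.
  rewrite disjoints_subset; apply/subsetP => x xS; rewrite inE.
  by apply/imsetP => -[a aD xa]; have [_ _ _ _] := mate_non_nbhd (sDN a aD); rewrite -xa xS.
apply: leq_omega_on.
  rewrite subUset soloX; apply/subsetP => _ /imsetP [a aD ->].
  by have [] := mate_non_nbhd (sDN a aD).
have mate_solo a x : a \in D -> x \in solo X f -> e (mate a) x.
  move=> aD xS; have aN := sDN a aD.
  have [->|nxu] := eqVneq x u; first by rewrite e_sym mate_adj_u.
  exact: mate_adj_solo.
apply/cliqueP => x y /setUP [xS|/imsetP [a aD ->]] /setUP [yS|/imsetP [a' a'D ->]] nxy.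
- by move/cliqueP: (solo_clique fcol fopt); apply.
- by rewrite e_sym mate_solo.
- by rewrite mate_solo.
- have naa : a != a' by apply: contraNneq nxy => ->.
  case/orP: (DN2 a a' aD a'D naa) => [aN2|a'N2]; first by apply: mate_adj; rewrite ?sDN.
  by rewrite e_sym; apply: mate_adj; rewrite ?sDN // eq_sym.
Qed.

Lemma solo_non_nbhd_omega : 2 * #|solo X f| + #|N| <= 2 * omega_on X.
Proof.
have S_gt0 : 0 < #|solo X f| by apply/card_gt0P; exists u.
have N1N : N1 \subset N by apply/subsetP => a /setIdP [].
have cardN : #|N| = #|N1| + #|N2| by rewrite cardsDS // subnKC // subset_leq_card.
have N2N : N2 \subset N := subsetDl N N1.
have := leq_solo_N1_omega.
have [N1_0|/set0Pn [a0 a0N1]] := eqVneq N1 set0.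
  have N2N2 : {in N2 &, forall a a', a != a' -> (a \in N2) || (a' \in N2)}.
    by move=> a a' ->.
  have := leq_solo_mate_omega N2N N2N2.
  by rewrite cardN N1_0 cards0; lia.
have a0N2 : a0 \notin N2 by rewrite inE a0N1.
have DN2 : {in a0 |: N2 &, forall a a', a != a' -> (a \in N2) || (a' \in N2)}.
  by move=> a a' /setU1P [->|aN2] /setU1P [->|a'N2]; rewrite ?eqxx ?aN2 ?a'N2 ?orbT.
have DN : a0 |: N2 \subset N by rewrite subUset sub1set (subsetP N1N) // N2N.
have := leq_solo_mate_omega DN DN2.
by rewrite cardsU1 a0N2 cardN; lia.
Qed.

End NonNeighbours.

Lemma chi_on_alpha2 : 4 * chi_on e X <= 2 * omega_on X + Delta_on X + #|X| + 1.
Proof.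
have [f fcol fopt] := chi_on_attained X.
have := card_colors_solo X f; rewrite fopt.
have [S0|/set0Pn [u uS]] := eqVneq (solo X f) set0.
  rewrite S0 cards0; have [->|/set0Pn [v vX]] := eqVneq X set0; first by rewrite cards0; lia.
  have := card_nbhd_split vX; have := leq_Delta_on vX.
  have := leq_omega_on (non_nbhd_subset X v) (non_nbhd_clique vX).
  lia.
have uX := subsetP (soloX X f) u uS.
have := card_nbhd_split uX; have := leq_Delta_on uX; have := solo_non_nbhd_omega fcol fopt uS.
lia.
Qed.

End AlphaTwo.

Lemma chi_on_bound (X : {set T}) :
  4 * chi_on e X <= 2 * omega_on X + Delta_on X + #|X| + 1.
Proof.
have [n] := ubnP #|X|; elim: n X => // n IH X /ltnSE cardX.
have [alpha2|alpha3] := leqP (alpha_on e X) 2; first exact: chi_on_alpha2.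
have := chi_alpha_on_step (fun Y cardY => IH Y (leq_trans cardY cardX)).
lia.
Qed.

Lemma chi_alpha_on_bound (X : {set T}) :
  4 * chi_on e X + alpha_on e X <= 2 * omega_on X + Delta_on X + #|X| + 4.
Proof. by apply: chi_alpha_on_step => Y _; apply: chi_on_bound. Qed.

Lemma compl_cutset_join (K : {set T}) : compl_cutset e K ->
  exists A B : {set T}, [/\ A != set0, B != set0, [disjoint A & B],
    K :|: A :|: B = setT & {in A & B, forall a b, e a b}].
Proof.
case=> u [v [uK vK nuv]].
set R := [rel x y | _] in nuv.
exists [set x | (x \notin K) && connect R u x], [set x | (x \notin K) && ~~ connect R u x].
split.
- by apply/set0Pn; exists u; rewrite inE uK connect0.
- by apply/set0Pn; exists v; rewrite inE vK nuv.
- by rewrite disjoints_subset; apply/subsetP => x; rewrite !inE => /andP [-> ->].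
- by apply/setP => x; rewrite !inE; case: (x \in K); case: (connect R u x).
move=> a b; rewrite !inE => /andP [aK ua] /andP [bK nub].
have nab : a != b by apply: contraNneq nub => <-.
apply: contraNT nub => neab; apply: connect_trans ua (connect1 _).
by rewrite /= aK bK /compl_rel /= neab nab.
Qed.

Section Join.
Variables (A B : {set T}).
Hypotheses (dAB : [disjoint A & B]) (AB : {in A & B, forall a b, e a b}).

Lemma omega_on_join : omega_on A + omega_on B <= omega e.
Proof.
have [QA /andP [sQA cQA] <-] := omega_on_attained A.
have [QB /andP [sQB cQB] <-] := omega_on_attained B.
rewrite -cardsU_disjoint; last exact: disjointWl sQA (disjointWr sQB dAB).
rewrite omega_omega_on; apply: leq_omega_on (subsetT _) _.
apply/cliqueP => x y /setUP [xA|xB] /setUP [yA|yB] nxy.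
- by move/cliqueP: cQA; apply.
- by apply: AB; [apply: (subsetP sQA) | apply: (subsetP sQB)].
- by rewrite e_sym; apply: AB; [apply: (subsetP sQA) | apply: (subsetP sQB)].
- by move/cliqueP: cQB; apply.
Qed.

Lemma Delta_on_join : A != set0 -> Delta_on A + #|B| <= Delta e.
Proof.
move=> /Delta_on_attained [x xA <-]; rewrite -cardsU_disjoint; last first.
  by apply: disjointWl dAB; apply/subsetP => y /setIdP [].
rewrite Delta_Delta_on; apply: leq_trans (leq_Delta_on (in_setT x)); apply: subset_leq_card.
by apply/subsetP => y; rewrite !inE => /orP [/andP [_ ->] //|yB]; apply: AB.
Qed.

Lemma alpha_join (K : {set T}) : K :|: A :|: B = setT ->
  alpha e <= alpha_on e K + maxn (alpha_on e A) (alpha_on e B).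
Proof.
move=> KAB; rewrite /alpha; have [I /andP [_ sI] <-] := alpha_on_attained setT.
rewrite -(cardsID K I); apply: leq_add.
  by apply: leq_alpha_on (subsetIr _ _) (stableS (subsetIl _ _) sI).
have sIK : stable e (I :\: K) by apply: stableS sI; apply: subsetDl.
have /stableP nadjIK := sIK.
have IK_AB x : x \in I :\: K -> (x \in A) || (x \in B).
  by case/setDP => _ xK; move: (in_setT x); rewrite -KAB !inE (negbTE xK).
have [/exists_inP [a aIK aA]|/exists_inP noA] := boolP [exists a in I :\: K, a \in A].
  apply: leq_trans (leq_maxl _ _); apply: leq_alpha_on sIK; apply/subsetP => x xIK.
  case/orP: (IK_AB x xIK) => // xB.
  by move: (nadjIK a x aIK xIK); rewrite AB.
apply: leq_trans (leq_maxr _ _); apply: leq_alpha_on sIK; apply/subsetP => x xIK.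
by case/orP: (IK_AB x xIK) => // xA; case: noA; exists x.
Qed.

End Join.

Lemma chi_alpha_compl_cutset (K : {set T}) : compl_cutset e K ->
  4 * chi e + alpha e <= 2 * omega e + 2 * Delta e + 5 + 4 * chi_on e K + alpha_on e K.
Proof.
case/compl_cutset_join => A [B [A0 B0 dAB KAB AB]].
have BA : {in B & A, forall b a, e b a} by move=> b a bB aA; rewrite e_sym AB.
have dBA : [disjoint B & A] by rewrite disjoint_sym.
have chiKAB : chi e <= chi_on e K + chi_on e A + chi_on e B.
  by rewrite /chi -KAB; apply: leq_trans (chi_on_setU _ _) _; rewrite leq_add2r chi_on_setU.
have := omega_on_join dAB AB; have := Delta_on_join dAB AB A0; have := Delta_on_join dBA BA B0.
have := alpha_join AB KAB.
have := chi_on_bound A; have := chi_on_bound B.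
have := chi_alpha_on_bound A; have := chi_alpha_on_bound B.
by case: (leqP (alpha_on e A) (alpha_on e B)); lia.
Qed.

End Graph.

Import GRing.Theory Num.Theory.
Local Open Scope ring_scope.

Theorem corollary6 (T : finType) (e : rel T)
  (e_sym : symmetric e) (e_irr : irreflexive e) (T_ne : (0 < #|T|)%N)
  (K : {set T}) (hK : compl_cutset e K) :
  (chi e)%:R <= (1/2 : rat) * ((omega e)%:R + (Delta e)%:R + 1)
     + (4 * (chi_on e K)%:R + (alpha_on e K)%:R + 3 - (alpha e)%:R) / 4.
Proof.
have := chi_alpha_compl_cutset e_sym e_irr hK.
by rewrite -(ler_nat rat) !natrD; lra.
Qed.
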